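(* Let $F$ be a field of characteristic $\neq 2,3$, $V$ an $F$-vector space and $f$ a symmetric bilinear form on $V$. The Jordan algebra $J(V,f)$ admits a derivation with invertible values if and only if there exist $x, y \in V$ such that $f(x,x)\neq 0$, $f(y,y)\neq 0$, $f(x,y)=0$, and $-\frac{f(y,y)}{f(x,x)}$ is not a square in $F$.
   Context: $J(V,f)$ is the vector space $F\oplus V$ with multiplication $(\alpha+v)(\beta+u) = \alpha\beta + f(v,u) + \alpha u + \beta v$ for $\alpha,\beta\in F$, $u,v\in V$; it is a unital Jordan algebra. An element $x$ of a unital Jordan algebra $J$ is invertible if there exists $y\in J$ with $xy=1$, $x^2y=x$. A derivation with invertible values of $J$ is a nonzero derivation $d$ of $J$ such that for every $x \in J$, $d(x)$ is either invertible or equal to $0$. *)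

From HB Require Import structures.
From mathcomp Require Import all_boot all_order all_algebra.
Set Implicit Arguments. Unset Strict Implicit. Unset Printing Implicit Defensive.
Import GRing.Theory.
Local Open Scope ring_scope.

Section JVF.
Variables (F : fieldType) (V : lmodType F).

(* f is a symmetric bilinear form on V (linearity in the second argument
   follows from symmetry). *)
Definition sym_bilinear (f : V -> V -> F) : Prop :=
  (forall (a : F) (u v w : V), f (a *: u + v) w = a * f u w + f v w) /\
  (forall u v : V, f u v = f v u).

Definition jadd (x y : F * V) : F * V := (x.1 + y.1, x.2 + y.2).
Definition jscale (a : F) (x : F * V) : F * V := (a * x.1, a *: x.2).
Definition jzero : F * V := (0, 0).

Definition jmul (f : V -> V -> F) (x y : F * V) : F * V :=
  (x.1 * y.1 + f x.2 y.2, x.1 *: y.2 + y.1 *: x.2).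
Definition jone : F * V := (1, 0).

Definition jinvertible (f : V -> V -> F) (x : F * V) : Prop :=
  exists y : F * V, jmul f x y = jone /\ jmul f (jmul f x x) y = x.

Definition jderivation (f : V -> V -> F) (d : F * V -> F * V) : Prop :=
  (forall (a : F) (x y : F * V), d (jadd (jscale a x) y) = jadd (jscale a (d x)) (d y)) /\
  (forall x y : F * V, d (jmul f x y) = jadd (jmul f (d x) y) (jmul f x (d y))).

Definition derivation_inv_values (f : V -> V -> F) (d : F * V -> F * V) : Prop :=
  [/\ jderivation f d,
      (exists x, d x <> jzero) &
      (forall x, jinvertible f (d x) \/ d x = jzero)].
End JVF.

From HB Require Import structures.
From mathcomp Require Import all_boot all_order all_algebra ring.
Import GRing.Theory.
Local Open Scope ring_scope.
Set Implicit Arguments. Unset Strict Implicit.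

(* Every derivation of J(V,f) kills F and is of the form alpha + v |-> D v with
   D linear and f(v, D v) = 0; a pure vector w is invertible iff f(w,w) != 0.
   So a derivation with invertible values is the same as a nonzero such D whose
   image is anisotropic. Given one, x := D v and y := D x are f-orthogonal and
   anisotropic, and if -f(y,y)/f(x,x) = c^2 then D(c v + x) = c x + y would be a
   nonzero isotropic value. Conversely, for x, y as in the statement, the
   infinitesimal rotation v |-> f(y,v) x - f(x,v) y of the plane <x, y> has
   f(Dv, Dv) = f(y,v)^2 f(x,x) + f(x,v)^2 f(y,y), which vanishes only if
   f(x,v) = f(y,v) = 0 since -f(y,y)/f(x,x) is not a square. *)

Lemma addr_self_eq0 (M : zmodType) (a : M) : a = a + a -> a = 0.
Proof. by move=> h; apply: (addrI a); rewrite addr0 -h. Qed.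

Section LinearFun.
Variables (R : pzRingType) (U : lmodType R) (D : U -> U).
Hypothesis Dlin : linear D.

Lemma linear_fun0 : D 0 = 0.
Proof. by apply: addr_self_eq0; have := Dlin 1 0 0; rewrite !scale1r addr0. Qed.

Lemma linear_funD u v : D (u + v) = D u + D v.
Proof. by rewrite -[u in LHS]scale1r Dlin scale1r. Qed.

Lemma linear_funZ a u : D (a *: u) = a *: D u.
Proof. by rewrite -[a *: u]addr0 Dlin linear_fun0 addr0. Qed.

End LinearFun.

Section SymBilinear.
Variables (F : fieldType) (V : lmodType F) (f : V -> V -> F).
Hypothesis hf : sym_bilinear f.

Lemma fC u v : f u v = f v u. Proof. by case: hf. Qed.

Lemma fDl u v w : f (u + v) w = f u w + f v w.
Proof. by case: hf => flin _; have := flin 1 u v w; rewrite scale1r mul1r. Qed.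

Lemma f0l w : f 0 w = 0.
Proof. by case: hf => flin _; have := flin (-1) w w w; rewrite scaleN1r mulN1r !addNr. Qed.

Lemma fZl a u w : f (a *: u) w = a * f u w.
Proof. by case: hf => flin _; rewrite -[a *: u]addr0 flin f0l addr0. Qed.

Lemma fNl u w : f (- u) w = - f u w.
Proof. by rewrite -scaleN1r fZl mulN1r. Qed.

Lemma fBl u v w : f (u - v) w = f u w - f v w.
Proof. by rewrite fDl fNl. Qed.

Lemma f0r w : f w 0 = 0. Proof. by rewrite fC f0l. Qed.

Lemma fDr u v w : f w (u + v) = f w u + f w v.
Proof. by rewrite fC fDl !(fC w). Qed.

Lemma fZr a u w : f w (a *: u) = a * f w u.
Proof. by rewrite fC fZl fC. Qed.

Lemma fBr u v w : f w (u - v) = f w u - f w v.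
Proof. by rewrite !(fC w) fBl. Qed.

Lemma jmulr1 p : jmul f p (jone V) = p.
Proof. by case: p => a w; rewrite /jmul /= mulr1 f0r addr0 scaler0 add0r scale1r. Qed.

Lemma jmul1r p : jmul f (jone V) p = p.
Proof. by case: p => a w; rewrite /jmul /= mul1r f0l addr0 scaler0 addr0 scale1r. Qed.

Definition alternating (D : V -> V) := forall v, f v (D v) = 0.

Definition anisotropic_image (D : V -> V) :=
  forall v, D v != 0 -> f (D v) (D v) != 0.

Lemma alternating_polar (D : V -> V) : linear D -> alternating D ->
  forall u v, f (D u) v + f u (D v) = 0.
Proof.
move=> Dlin Dalt u v; have := Dalt (u + v).
rewrite (linear_funD Dlin) !(fDl, fDr) !Dalt add0r addr0 => <-.
by rewrite fC addrC.
Qed.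

Lemma jinvertible_vecP w : jinvertible f (0, w) <-> f w w != 0.
Proof.
split.
- case=> [[b u]]; rewrite /jmul /jone /= !mul0r !add0r scale0r add0r.
  case=> [[fwu1 _] [_ bw]]; apply/eqP => fww0.
  move: bw fwu1; rewrite fww0 !(scale0r, add0r, scaler0) => <-.
  by rewrite f0l => /esym/eqP; rewrite oner_eq0.
- move=> fww; exists (0, (f w w)^-1 *: w).
  rewrite /jmul /jone /= !(mul0r, add0r, scale0r, addr0, scaler0).
  by rewrite mulr0 f0l add0r fZr mulVf // scalerA mulfV // scale1r.
Qed.

Definition jder_of (D : V -> V) (p : F * V) : F * V := (0, D p.2).

Lemma jder_of_derivation D : linear D -> alternating D -> jderivation f (jder_of D).
Proof.
move=> Dlin Dalt; split.
- by move=> a [p1 p2] [q1 q2]; rewrite /jder_of /jadd /jscale /= mulr0 addr0 Dlin.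
- move=> [p1 p2] [q1 q2]; rewrite /jder_of /jmul /jadd /=; congr pair.
    by rewrite mul0r mulr0 !add0r alternating_polar.
  by rewrite !scale0r add0r addr0 Dlin (linear_funZ Dlin) addrC.
Qed.

Lemma jder_of_inv_values D : linear D -> alternating D -> (exists v, D v != 0) ->
  anisotropic_image D -> derivation_inv_values f (jder_of D).
Proof.
move=> Dlin Dalt [v Dv] Daniso; split; first exact: jder_of_derivation.
  by exists (0, v); case=> /eqP; rewrite (negbTE Dv).
move=> [a w]; rewrite /jder_of /=.
have [->|Dw] := eqVneq (D w) 0; first by right.
by left; apply/jinvertible_vecP/Daniso.
Qed.

End SymBilinear.

Section DerivationShape.
Variables (F : fieldType) (V : lmodType F) (f : V -> V -> F).
Hypotheses (hf : sym_bilinear f) (h2 : (2%:R : F) != 0).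
Variable d : F * V -> F * V.
Hypothesis dder : jderivation f d.

Definition jder_vpart (v : V) : V := (d (0, v)).2.

Lemma jder0 : d (jzero V) = jzero V.
Proof.
case: dder => dlin _; have := dlin (-1) (jzero V) (jzero V).
rewrite /jadd /jscale /jzero /= mulr0 scaler0 !addr0.
by case: (d (0, 0)) => a w /=; rewrite mulN1r scaleN1r !addNr.
Qed.

Lemma jder1 : d (jone V) = jzero V.
Proof.
case: dder => _ dmul; have := dmul (jone V) (jone V).
rewrite !(jmulr1 hf) (jmul1r hf) /jadd /jzero.
by case: (d (jone V)) => a w -[/addr_self_eq0 -> /addr_self_eq0 ->].
Qed.

Lemma jder_scalar a v : d (a, v) = d (0, v).
Proof.
case: dder => dlin _.
have -> : (a, v) = jadd (jscale a (jone V)) (0, v).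
  by rewrite /jadd /jscale /jone /= mulr1 addr0 scaler0 add0r.
rewrite dlin jder1 /jadd /jscale /jzero /=.
by case: (d (0, v)) => b w; rewrite mulr0 scaler0 !add0r.
Qed.

(* Apply d to (0,v)^2 = f(v,v) + 0, whose image vanishes since d kills scalars. *)
Lemma jder_vec v : (d (0, v)).1 = 0 /\ f v (jder_vpart v) = 0.
Proof.
case: dder => _ dmul; have := dmul (0, v) (0, v).
rewrite /jder_vpart /jmul /= mul0r add0r !scale0r addr0 jder_scalar jder0.
case dv: (d (0, v)) => [a w]; rewrite /jadd /jzero /=.
rewrite mulr0 mul0r !add0r addr0 (fC hf w v) => -[fvw av]; split.
  have /eqP : 2%:R *: (a *: v) = 0 by rewrite scaler_nat mulr2n -av.
  rewrite scaler_eq0 (negbTE h2) /= scaler_eq0 => /orP[/eqP //|/eqP v0].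
  by move: dv; rewrite v0 -/(jzero V) jder0 => -[].
have /eqP : f v w * 2%:R = 0 by rewrite mulr_natr mulr2n -fvw.
by rewrite mulf_eq0 (negbTE h2) orbF => /eqP.
Qed.

Lemma jder_of_vpart p : d p = jder_of jder_vpart p.
Proof.
case: p => a v; rewrite jder_scalar /jder_of /jder_vpart /=.
by case: (jder_vec v); case: (d (0, v)) => b w /= ->.
Qed.

Lemma jder_vpart_linear : linear jder_vpart.
Proof.
case: dder => dlin _ c u w; have := dlin c (0, u) (0, w).
by rewrite /jadd /jscale /jder_vpart /= mulr0 addr0 => ->.
Qed.

Lemma jder_vpart_alternating : alternating f jder_vpart.
Proof. by move=> v; case: (jder_vec v). Qed.

Lemma jder_vpart_anisotropic : (forall p, jinvertible f (d p) \/ d p = jzero V) ->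
  anisotropic_image f jder_vpart.
Proof.
move=> dinv v Dv; case: (dinv (0, v)); rewrite jder_of_vpart /jder_of /=.
  by move/(jinvertible_vecP hf).
by case=> /eqP; rewrite (negbTE Dv).
Qed.

End DerivationShape.

Section NonsquarePairs.
Variables (F : fieldType) (V : lmodType F) (f : V -> V -> F).
Hypothesis hf : sym_bilinear f.

Definition nonsquare_pair (x y : V) :=
  [/\ f x x != 0, f y y != 0, f x y = 0 &
      ~ (exists c : F, c ^+ 2 = - (f y y / f x x))].

Lemma anisotropic_image_pair (D : V -> V) : linear D -> alternating f D ->
  anisotropic_image f D -> forall v, D v != 0 -> nonsquare_pair (D v) (D (D v)).
Proof.
move=> Dlin Dalt Daniso v Dv; set x := D v; set y := D x.
have fxx := Daniso v Dv.
have Dx : D x != 0.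
  apply: contraNneq fxx => Dx0.
  by have := alternating_polar hf Dlin Dalt v x; rewrite Dx0 (f0r hf) addr0 => ->.
have fyy := Daniso x Dx.
have fxy : f x y = 0 := Dalt x.
split=> // -[c c2].
have fyyE : f y y = - (c ^+ 2 * f x x) by rewrite c2; field.
have Dz : D (c *: v + x) = c *: x + y by rewrite Dlin.
have Dz0 : c *: x + y = 0.
  apply/eqP; rewrite -Dz; apply: contraT => /Daniso.
  rewrite Dz !(fDl hf, fDr hf, fZl hf, fZr hf) (fC hf y x) fxy fyyE.
  by rewrite mulr0 !addr0 mulrA -expr2 add0r addrN eqxx.
have /eqP : f x (c *: x + y) = 0 by rewrite Dz0 (f0r hf).
rewrite (fDr hf) (fZr hf) fxy addr0 mulf_eq0 (negbTE fxx) orbF => /eqP c0.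
have y0 : y = 0 by rewrite -Dz0 c0 scale0r add0r.
by move: fyy; rewrite -/x -/y y0 (f0l hf) eqxx.
Qed.

Definition plane_rotation (x y v : V) : V := f y v *: x - f x v *: y.

Variables x y : V.

Lemma plane_rotation_linear : linear (plane_rotation x y).
Proof.
move=> a u w; rewrite /plane_rotation !(fDr hf, fZr hf) !scalerDl -!scalerA.
by rewrite scalerBr opprD addrACA.
Qed.

Lemma plane_rotation_alternating : alternating f (plane_rotation x y).
Proof.
by move=> v; rewrite /plane_rotation (fBr hf) !(fZr hf) (fC hf v x) (fC hf v y); ring.
Qed.

Lemma plane_rotation_norm v : f x y = 0 ->
  f (plane_rotation x y v) (plane_rotation x y v)
  = f y v ^+ 2 * f x x + f x v ^+ 2 * f y y.
Proof.
move=> fxy; rewrite /plane_rotation !(fBl hf, fBr hf, fZl hf, fZr hf) (fC hf y x) fxy.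
ring.
Qed.

Hypothesis xy : nonsquare_pair x y.

Lemma plane_rotation_anisotropic : anisotropic_image f (plane_rotation x y).
Proof.
case: xy => fxx fyy fxy nonsq v.
rewrite plane_rotation_norm // => Dv; apply/eqP => N0.
have [a0|an] := eqVneq (f y v) 0.
  have [b0|bn] := eqVneq (f x v) 0.
    by move: Dv; rewrite /plane_rotation a0 b0 !scale0r subr0 eqxx.
  move: N0; rewrite a0 expr0n mul0r add0r => /eqP.
  by rewrite mulf_eq0 expf_eq0 (negbTE bn) (negbTE fyy) andbF.
have bn : f x v != 0.
  apply/eqP => b0; move: N0; rewrite b0 expr0n mul0r addr0 => /eqP.
  by rewrite mulf_eq0 expf_eq0 (negbTE an) (negbTE fxx) andbF.
apply: nonsq; exists (f y v / f x v).
have fyyE : f y y = - (f y v ^+ 2 * f x x) / f x v ^+ 2.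
  have N0' : f x v ^+ 2 * f y y = - (f y v ^+ 2 * f x x).
    by apply/eqP; rewrite -addr_eq0 addrC N0.
  by rewrite -N0'; field; exact: bn.
by rewrite fyyE; field; apply/andP.
Qed.

Lemma plane_rotation_neq0 : plane_rotation x y x != 0.
Proof.
case: xy => fxx fyy fxy _.
rewrite /plane_rotation (fC hf y x) fxy scale0r sub0r oppr_eq0 scaler_eq0 negb_or fxx.
by apply: contraNneq fyy => ->; rewrite (f0l hf).
Qed.

End NonsquarePairs.

Theorem lemma5 (F : fieldType) (V : lmodType F) (f : V -> V -> F)
  (hf : sym_bilinear f) (h2 : (2%:R : F) != 0) (h3 : (3%:R : F) != 0) :
  (exists d : F * V -> F * V, derivation_inv_values f d) <->
  (exists x y : V, [/\ f x x != 0, f y y != 0, f x y = 0 &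
     ~ (exists c : F, c ^+ 2 = - (f y y / f x x))]).
Proof.
split.
- case=> d [dder [p dp] dinv].
  have Dv : jder_vpart d p.2 != 0.
    apply: contra_not_neq dp => D0.
    by rewrite (jder_of_vpart hf h2 dder) /jder_of D0.
  exists (jder_vpart d p.2), (jder_vpart d (jder_vpart d p.2)).
  exact: (anisotropic_image_pair hf (jder_vpart_linear dder)
    (jder_vpart_alternating hf h2 dder) (jder_vpart_anisotropic hf h2 dder dinv) Dv).
- case=> x [y xy]; exists (jder_of (plane_rotation f x y)).
  apply: (jder_of_inv_values hf (plane_rotation_linear hf x y)
    (plane_rotation_alternating hf x y) _ (plane_rotation_anisotropic hf xy)).
  by exists x; apply: (plane_rotation_neq0 hf xy).
Qed.
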